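(* Let $K$ be an algebraically closed field and $Q$ an acyclic quiver that contains as a subquiver distinct vertices $v_0,v_1,v_2,\dots$ with an arrow $v_{n+1}\to v_n$ for each $n\in\omega$. Let $\mathcal X$ be a finite dimensional $K$-linear representation of $Q$ such that for each $n\in\omega$, $\mathcal X_{v_n}\neq\{0\}$ and $\mathcal X\restriction\overline{\{v_n\}}^Q$ is isomorphic to a direct sum of finitely many copies of the representation $F(e_{v_n}KQ)\restriction\overline{\{v_n\}}^Q$. Then $\mathrm{Ext}^1_{KQ}(G(\mathcal X),KQ)\neq0$.
   Context: A quiver $Q=(Q_0,Q_1)$ is a directed graph (possibly infinite); acyclic means no nontrivial path has equal source and target. Paths are composable sequences of arrows written left to right, with trivial paths $e_v$; the path algebra $KQ$ has $K$-basis all paths, product = concatenation when the target of the first equals the source of the second, else $0$. Modules are right modules. A $K$-linear representation $\mathcal X$ assigns vector spaces $\mathcal X_v$ and linear maps $\mathcal X_a:\mathcal X_{s(a)}\to\mathcal X_{t(a)}$; finite dimensional means each $\mathcal X_v$ is finite dimensional. For a $KQ$-module $M$, $F(M)$ is the representation with $F(M)_v=Me_v$ and $F(M)_a(x)=xa$. $G(\mathcal X)$ is the $KQ$-module on $\bigoplus_{v}\mathcal X_v$ with $me_w$ the $\mathcal X_w$-component of $m$ and $ma=\mathcal X_a(me_{s(a)})$. The closure $\overline{\{v\}}^Q$ is the subquiver whose vertices are those reachable from $v$ by a path (including $v$), with all arrows whose source is such a vertex; for a subquiver $P$, $\mathcal X\restriction P$ denotes the restriction of $\mathcal X$ to the vertices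 and arrows of $P$. *)

From HB Require Import structures.
From mathcomp Require Import all_boot all_algebra.
From mathcomp Require Import boolp classical_sets cardinality fsbigop.

Set Implicit Arguments.
Unset Strict Implicit.
Unset Printing Implicit Defensive.

Import GRing.Theory.
Local Open Scope ring_scope.
Local Open Scope classical_set_scope.

Section DSum.
Variables (K : pzRingType) (I : Type) (F : I -> lmodType K).

Record dsum := DSum {
  dval : forall i, F i ;
  dvalP : finite_set [set i | dval i <> 0] }.

HB.instance Definition _ := gen_eqMixin dsum.
HB.instance Definition _ := gen_choiceMixin dsum.

Lemma dsum_eq (x y : dsum) : dval x = dval y -> x = y.
Proof.
case: x y => [f fP] [g gP] /= E; subst g.
by rewrite (Prop_irrelevance fP gP).
Qed.

Lemma dsum0_fin : finite_set [set i | (0 : F i) <> 0].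
Proof. by apply: (sub_finite_set _ (finite_set0 I)) => i /=. Qed.

Definition dsum0 := DSum dsum0_fin.

Lemma dsumD_fin (x y : dsum) : finite_set [set i | dval x i + dval y i <> 0].
Proof.
apply: (sub_finite_set (B := [set i | dval x i <> 0] `|` [set i | dval y i <> 0])).
  move=> i /= H; case: (pselect (dval x i = 0)) => Hx; last by left.
  by right => Hy; apply: H; rewrite Hx Hy addr0.
by rewrite finite_setU; split; apply: dvalP.
Qed.

Definition dsumD (x y : dsum) := DSum (dsumD_fin x y).

Lemma dsumN_fin (x : dsum) : finite_set [set i | - dval x i <> 0].
Proof.
apply: (sub_finite_set _ (dvalP x)) => i /= H Hx.
by apply: H; rewrite Hx oppr0.
Qed.

Definition dsumN (x : dsum) := DSum (dsumN_fin x).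

Lemma dsumZ_fin (a : K) (x : dsum) : finite_set [set i | a *: dval x i <> 0].
Proof.
apply: (sub_finite_set _ (dvalP x)) => i /= H Hx.
by apply: H; rewrite Hx scaler0.
Qed.

Definition dsumZ (a : K) (x : dsum) := DSum (dsumZ_fin a x).

Lemma dsumA : associative dsumD.
Proof. by move=> x y z; apply: dsum_eq; apply: functional_extensionality_dep => i /=; rewrite addrA. Qed.
Lemma dsumC : commutative dsumD.
Proof. by move=> x y; apply: dsum_eq; apply: functional_extensionality_dep => i /=; rewrite addrC. Qed.
Lemma dsum0D : left_id dsum0 dsumD.
Proof. by move=> x; apply: dsum_eq; apply: functional_extensionality_dep => i /=; rewrite add0r. Qed.
Lemma dsumND : left_inverse dsum0 dsumN dsumD.
Proof. by move=> x; apply: dsum_eq; apply: functional_extensionality_dep => i /=; rewrite addNr. Qed.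

HB.instance Definition _ := GRing.isZmodule.Build dsum dsumA dsumC dsum0D dsumND.

Lemma dsumZA a b (x : dsum) : dsumZ a (dsumZ b x) = dsumZ (a * b) x.
Proof. by apply: dsum_eq; apply: functional_extensionality_dep => i /=; rewrite scalerA. Qed.
Lemma dsumZ1 : left_id 1 dsumZ.
Proof. by move=> x; apply: dsum_eq; apply: functional_extensionality_dep => i /=; rewrite scale1r. Qed.
Lemma dsumZDr : right_distributive dsumZ (@GRing.add dsum).
Proof. by move=> a x y; apply: dsum_eq; apply: functional_extensionality_dep => i /=; rewrite scalerDr. Qed.
Lemma dsumZDl (x : dsum) : {morph dsumZ^~ x : a b / a + b}.
Proof. by move=> a b; apply: dsum_eq; apply: functional_extensionality_dep => i /=; rewrite scalerDl. Qed.

HB.instance Definition _ := GRing.Zmodule_isLmodule.Build K dsum dsumZA dsumZ1 dsumZDr dsumZDl.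

End DSum.

Arguments DSum {K I F} dval dvalP.
Arguments dval {K I F} d i.

Section DInj.
Variables (K : pzRingType) (I : Type) (F : I -> lmodType K).

Definition dinj_fun (w : I) (y : F w) : forall u, F u :=
  fun u => match pselect (w = u) with
           | left H => eq_rect w F y u H
           | right _ => 0
           end.

Lemma dinj_fin (w : I) (y : F w) : finite_set [set u | dinj_fun y u <> 0].
Proof.
apply: (sub_finite_set _ (finite_set1 w)) => u /=.
by rewrite /dinj_fun; case: pselect => // H _.
Qed.

Definition dinj (w : I) (y : F w) : dsum F := DSum (dinj_fun y) (dinj_fin y).
End DInj.

Record quiver := Quiver {
  qV : Type ;
  qA : Type ;
  qs : qA -> qV ;
  qt : qA -> qV }.

Section Paths.
Variable Q : quiver.

(* a_1 ... a_n is a path starting at v (arrows composed left to right) *)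
Fixpoint composable (v : qV Q) (l : seq (qA Q)) : Prop :=
  match l with
  | [::] => True
  | a :: l' => qs a = v /\ composable (qt a) l'
  end.

Fixpoint endpt (v : qV Q) (l : seq (qA Q)) : qV Q :=
  match l with
  | [::] => v
  | a :: l' => endpt (qt a) l'
  end.

Record qpath := QPath {
  psrc : qV Q ;
  parr : seq (qA Q) ;
  pok : composable psrc parr }.

HB.instance Definition _ := gen_eqMixin qpath.
HB.instance Definition _ := gen_choiceMixin qpath.

Definition ptgt (p : qpath) : qV Q := endpt (psrc p) (parr p).

Definition triv (v : qV Q) : qpath := @QPath v [::] I.

Definition parrow (a : qA Q) : qpath := @QPath (qs a) [:: a] (conj erefl I).

Lemma composable_cat v l1 l2 :
  composable v l1 -> composable (endpt v l1) l2 -> composable v (l1 ++ l2).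
Proof.
elim: l1 v => [|a l1 IH] v //= [Ha H1] H2; split => //; exact: IH.
Qed.

Lemma endpt_cat v l1 l2 : endpt v (l1 ++ l2) = endpt (endpt v l1) l2.
Proof. by elim: l1 v => [|a l1 IH] v //=. Qed.

Lemma pcat_ok (p q : qpath) : ptgt p = psrc q ->
  composable (psrc p) (parr p ++ parr q).
Proof.
move=> H; apply: composable_cat; first exact: pok.
by rewrite -/(ptgt p) H; exact: pok.
Qed.

Definition pcat (p q : qpath) (H : ptgt p = psrc q) : qpath :=
  @QPath (psrc p) (parr p ++ parr q) (pcat_ok H).

Lemma ptgt_pcat (p q : qpath) (H : ptgt p = psrc q) : ptgt (pcat H) = ptgt q.
Proof. by rewrite /ptgt /= endpt_cat -/(ptgt p) H. Qed.

Definition acyclic : Prop :=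
  forall p : qpath, psrc p = ptgt p -> parr p = [::].

(* w lies in the closure of {v}: reachable from v by a path *)
Definition reachable (v w : qV Q) : Prop :=
  exists p : qpath, psrc p = v /\ ptgt p = w.

End Paths.

Arguments triv {Q} v.
Arguments parrow {Q} a.

Section Reps.
Variables (K : fieldType) (Q : quiver).

Record rep := Rep {
  rsp : qV Q -> lmodType K ;
  rmap : forall a : qA Q, rsp (qs a) -> rsp (qt a) }.
Arguments rmap : clear implicits.

Definition rep_linear (X : rep) : Prop := forall a, linear (rmap X a).

Definition findim (U : lmodType K) : Prop :=
  exists s : seq U, forall x : U,
    exists c : 'I_(size s) -> K, x = \sum_(i < size s) c i *: s`_i.

Definition rep_findim (X : rep) : Prop := forall v, findim (rsp X v).

(* X restricted to the full subquiver on the vertex set P (with all arrows *)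
(* whose source lies in P, P being closed under successors) is isomorphic  *)
(* to Y restricted to it.                                                   *)
Definition rep_iso_on (P : set (qV Q)) (X Y : rep) : Prop :=
  exists phi : forall v, rsp X v -> rsp Y v,
    (forall v, P v -> linear (phi v) /\ bijective (phi v)) /\
    (forall a, P (qs a) -> forall x, phi (qt a) (rmap X a x) = rmap Y a (phi (qs a) x)).

Definition rep_pow (k : nat) (Y : rep) : rep :=
  @Rep (fun w => {ffun 'I_k -> rsp Y w})
       (fun a y => [ffun i => rmap Y a (y i)]).

Fixpoint rpathl (X : rep) (v : qV Q) (l : seq (qA Q)) :
    composable v l -> rsp X v -> rsp X (endpt v l) :=
  match l return composable v l -> rsp X v -> rsp X (endpt v l) with
  | [::] => fun _ x => x
  | a :: l' => fun H x =>
      @rpathl X (qt a) l' (proj2 H) (rmap X a (eq_rect v (rsp X) x (qs a) (esym (proj1 H))))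
  end.

Definition rpath (X : rep) (p : qpath Q) : rsp X (psrc p) -> rsp X (ptgt p) :=
  @rpathl X (psrc p) (parr p) (pok p).
Arguments rpath : clear implicits.

(* A (K-linear) right KQ-module, given by the right action of the basis     *)
(* paths of KQ; the axioms are in is_kqmod.                                 *)
Record kqmod := KQMod {
  mcar : lmodType K ;
  mact : mcar -> qpath Q -> mcar }.
Arguments mact : clear implicits.

Definition is_kqmod (M : kqmod) : Prop :=
  (forall p, linear (fun m => mact M m p)) /\
  (forall m (p q : qpath Q) (H : ptgt p = psrc q),
      mact M (mact M m p) q = mact M m (pcat H)) /\
  (forall m (p q : qpath Q), ptgt p <> psrc q -> mact M (mact M m p) q = 0).

Definition kqhom (M N : kqmod) (f : mcar M -> mcar N) : Prop :=
  linear f /\ forall m p, f (mact M m p) = mact N (f m) p.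

(* Ext^1_{KQ}(M, N) <> 0, via Yoneda: there is a non-split short exact      *)
(* sequence 0 -> N -> E -> M -> 0 of right KQ-modules.                      *)
Definition Ext1_neq0 (M N : kqmod) : Prop :=
  exists (E : kqmod) (i : mcar N -> mcar E) (pi : mcar E -> mcar M),
    is_kqmod E /\ kqhom i /\ kqhom pi /\ injective i /\ (forall x, exists e, pi e = x) /\
    (forall e, pi e = 0 <-> exists n, i n = e) /\
    ~ (exists sigma : mcar M -> mcar E, kqhom sigma /\ forall m, pi (sigma m) = m).

(* The path algebra KQ as a right module over itself:                       *)
(* K-vector space with basis the paths, right action by concatenation.      *)
Definition KQcar : lmodType K := dsum (fun _ : qpath Q => K^o).

Definition pbasis (r : qpath Q) : KQcar := @dinj K (qpath Q) (fun _ => K^o) r (1 : K).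

Definition pmul (p q : qpath Q) : KQcar :=
  match pselect (ptgt p = psrc q) with
  | left H => pbasis (pcat H)
  | right _ => 0
  end.

Definition kq_act (x : KQcar) (q : qpath Q) : KQcar :=
  \sum_(p \in [set: qpath Q]) (dval x p : K) *: pmul p q.

Definition KQreg : kqmod := @KQMod KQcar kq_act.

(* G(X): the module on (+)_v X_v with m e_w the X_w-component of m and      *)
(* m p = X_p(m e_{s(p)}) placed in the component t(p).                      *)
Definition GX (X : rep) : kqmod :=
  @KQMod (dsum (rsp X))
         (fun m p => @dinj K (qV Q) (rsp X) (ptgt p) (rpath X p (dval m (psrc p)))).

(* F(e_v KQ): the representation w |-> e_v KQ e_w, the K-span of the paths *)
(* from v to w, with arrows acting by right multiplication.                  *)
Definition pathsft (v w : qV Q) := {p : qpath Q | psrc p = v /\ ptgt p = w}.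
HB.instance Definition _ v w := gen_eqMixin (pathsft v w).
HB.instance Definition _ v w := gen_choiceMixin (pathsft v w).

Definition pext (v : qV Q) (a : qA Q) (p : pathsft v (qs a)) : pathsft v (qt a) :=
  exist _ (@pcat Q (sval p) (parrow a) (proj2 (svalP p) : ptgt (sval p) = psrc (parrow a)))
          (conj (proj1 (svalP p))
                (ptgt_pcat (proj2 (svalP p) : ptgt (sval p) = psrc (parrow a)))).

Definition Fe (v : qV Q) : rep :=
  @Rep (fun w => dsum (fun _ : pathsft v w => K^o))
       (fun a y => \sum_(p \in [set: pathsft v (qs a)])
                      (dval y p : K) *: @dinj K (pathsft v (qt a)) (fun _ => K^o) (pext p) (1 : K)).

End Reps.

(* Linear functionals lam_b : X_(s b) -> K on the arrows b of Q define a 1-cocycle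
   c(m, b_1 ... b_k) = sum_i lam_(b_i)(m b_1 ... b_(i-1)) b_(i+1) ... b_k
   from G(X) to KQ, hence an extension 0 -> KQ -> KQ (+) G(X) -> G(X) -> 0 with
   the twisted action (n, m) p = (n p + c(m, p), m p).  A splitting amounts to a
   linear h : G(X) -> KQ with h(m p) = h(m) p + c(m, p).  Take lam nonzero on the
   arrows a_j : v_(j+1) -> v_j, and let p_j = a_(j-1) ... a_0 : v_j -> v_0.  For
   x in X_(v_(j+1)), the coefficient of p_j in h(x p_(j+1)) is lam_(a_j)(x): the
   term h(x) p_(j+1) only involves paths longer than p_j, and the other terms of
   c(x, p_(j+1)) only shorter ones.  As x p_(j+1) lies in X_(v_0), the supports
   of the values of h on X_(v_0) contain every p_j; but h is linear and X_(v_0)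
   finite dimensional, so these supports lie in one finite set. *)

From HB Require Import structures.
From mathcomp Require Import all_boot all_algebra.
From mathcomp Require Import boolp classical_sets cardinality fsbigop.

Set Implicit Arguments.
Unset Strict Implicit.
Unset Printing Implicit Defensive.

Import GRing.Theory.
Local Open Scope ring_scope.
Local Open Scope classical_set_scope.

Section LinearFunctions.
Variables (R : pzRingType) (U V : lmodType R) (f : U -> V).
Hypothesis f_lin : linear f.

Lemma linear_funD : {morph f : x y / x + y}.
Proof. exact: (GRing.semilinear_linear f_lin).2. Qed.

Lemma linear_fun0 : f 0 = 0.
Proof. exact: (nmod_morphism_semilinear (GRing.semilinear_linear f_lin)).1. Qed.

Lemma linear_funZ (a : R) : {morph f : x / a *: x}.
Proof. by move=> x; rewrite -[a *: x]addr0 f_lin linear_fun0 addr0. Qed.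

Lemma linear_fun_sum (I : Type) (r : seq I) (P : pred I) (F : I -> U) :
  f (\sum_(i <- r | P i) F i) = \sum_(i <- r | P i) f (F i).
Proof. exact: (big_morph f linear_funD linear_fun0). Qed.

End LinearFunctions.

Section DirectSums.
Variables (R : pzRingType) (I : Type) (F : I -> lmodType R).

Lemma dval_linear (i : I) : linear (fun x : dsum F => dval x i).
Proof. by []. Qed.

Lemma dvalD (x y : dsum F) (i : I) : dval (x + y) i = dval x i + dval y i.
Proof. by []. Qed.

Lemma dvalZ (a : R) (x : dsum F) (i : I) : dval (a *: x) i = a *: dval x i.
Proof. by []. Qed.

Lemma dval_sum (J : Type) (r : seq J) (P : pred J) (G : J -> dsum F) (i : I) :
  dval (\sum_(j <- r | P j) G j) i = \sum_(j <- r | P j) dval (G j) i.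
Proof. exact: (linear_fun_sum (dval_linear i)). Qed.

Lemma dinj_linear (w : I) : linear (@dinj R I F w).
Proof.
move=> a y z; apply: dsum_eq; apply: functional_extensionality_dep => u /=.
rewrite /dinj_fun; case: pselect => [E|_]; first by case: u / E.
by rewrite scaler0 addr0.
Qed.

Lemma dval_dinj (w : I) (y : F w) : dval (dinj y) w = y.
Proof.
by rewrite /= /dinj_fun; case: pselect => // E; rewrite (Prop_irrelevance E erefl).
Qed.

Lemma dval_dinj_neq (w u : I) (y : F w) : w <> u -> dval (dinj y) u = 0.
Proof. by rewrite /= /dinj_fun; case: pselect. Qed.

Lemma dinj_transport (w u : I) (y : F w) : w = u -> exists z : F u, dinj y = dinj z.
Proof. by case: u /; exists y. Qed.

End DirectSums.

Lemma dsum_supp_seq (R : pzRingType) (I : choiceType) (F : I -> lmodType R)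
    (xs : seq (dsum F)) :
  exists2 S : seq I, uniq S & forall x i, x \in xs -> dval x i <> 0 -> i \in S.
Proof.
have : finite_set (\bigcup_(x in [set` xs]) [set i | dval x i <> 0]).
  by apply: bigcup_finite => // x _; apply: dvalP.
move/finite_fsetP => [A EA]; exists (finmap.enum_fset A) => [|x i xin xi0].
  exact: finmap.fset_uniq.
have : (\bigcup_(x in [set` xs]) [set i | dval x i <> 0]) i by exists x.
by rewrite EA.
Qed.

Section FiniteDimension.
Variable K : fieldType.

Lemma findim_supp_bounded (U : lmodType K) (I : Type) (F : I -> lmodType K)
    (h : U -> dsum F) :
  findim U -> linear h ->
  exists2 A : set I, finite_set A & forall y i, dval (h y) i <> 0 -> A i.
Proof.
move=> [s span] h_lin.
exists (\bigcup_(x in [set` s]) [set i | dval (h x) i <> 0]).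
  by apply: bigcup_finite => // x _; apply: dvalP.
move=> y i; have [c ->] := span y.
rewrite (linear_fun_sum h_lin) dval_sum; apply: contra_notP => i_out.
rewrite big1 // => j _; rewrite linear_funZ //=.
have [->|hj] := pselect (dval (h s`_j) i = 0); first by rewrite scaler0.
by exfalso; apply: i_out; exists s`_j => //=; apply: mem_nth.
Qed.

Definition separating (U : lmodType K) : Prop :=
  forall x : U, x <> 0 -> exists2 l : U -> K, scalar l & l x <> 0.

Lemma separating_scalar_dsum (I : Type) : separating (dsum (fun _ : I => K^o)).
Proof.
move=> x x_neq0; have [i xi] : exists i, dval x i <> 0.
  apply: contra_notP x_neq0 => x0; apply: dsum_eq.
  by apply: functional_extensionality_dep => i /=; apply: contra_notP x0; exists i.
by exists (fun y => dval y i).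
Qed.

Lemma separating_ffun (k : nat) (U : lmodType K) :
  separating U -> separating {ffun 'I_k -> U}.
Proof.
move=> sepU x x_neq0; have [i xi] : exists i, x i <> 0.
  apply: contra_notP x_neq0 => x0; apply/ffunP => i; rewrite ffunE.
  by apply: contra_notP x0; exists i.
have [l l_scalar lxi] := sepU _ xi.
by exists (fun y : {ffun 'I_k -> U} => l (y i)) => // a y z; rewrite !ffunE l_scalar.
Qed.

Lemma separating_inj (U V : lmodType K) (phi : U -> V) :
  linear phi -> injective phi -> separating V -> separating U.
Proof.
move=> phi_lin phi_inj sepV x x_neq0.
have [|l l_scalar lx] := sepV (phi x).
  by move=> phix0; apply: x_neq0; apply: phi_inj; rewrite phix0 linear_fun0.
by exists (fun y => l (phi y)) => // a y z; rewrite phi_lin l_scalar.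
Qed.

End FiniteDimension.

Lemma qpath_eq (Q : quiver) (p q : qpath Q) :
  psrc p = psrc q -> parr p = parr q -> p = q.
Proof.
case: p q => s l H [s' l' H'] /= E1 E2; subst.
by rewrite (Prop_irrelevance H H').
Qed.

Section PathAlgebra.
Variables (K : fieldType) (Q : quiver).
Local Notation KQ := (KQcar K Q).
Local Notation path := (qpath Q).
Implicit Types (x y : KQ) (p q r s : path).

Lemma dval_pbasis r s : dval (pbasis K r) s = (r == s)%:R.
Proof.
rewrite /pbasis /= /dinj_fun; case: pselect => [E|r_neq_s]; last by case: eqP.
by subst s; rewrite eqxx.
Qed.

Lemma pmul_pcat p q (H : ptgt p = psrc q) : pmul K p q = pbasis K (pcat H).
Proof. by rewrite /pmul; case: pselect => // H'; rewrite (Prop_irrelevance H' H). Qed.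

Lemma pmul_neq p q : ptgt p <> psrc q -> pmul K p q = 0.
Proof. by rewrite /pmul; case: pselect. Qed.

Lemma kq_actE x q (S : seq path) :
  uniq S -> (forall r, dval x r <> 0 -> r \in S) ->
  kq_act x q = \sum_(r <- S) dval x r *: pmul K r q.
Proof.
move=> S_uniq supp_x; rewrite /kq_act fsbig_supp; apply: fsbig_fwiden => //.
  by move=> r [_ /= xr]; apply: supp_x => x0; apply: xr; rewrite x0 scale0r.
by move=> r [_ r_out] /=; apply: contra_notP r_out => ?.
Qed.

Lemma kq_act_linear q : linear (fun x : KQ => kq_act x q).
Proof.
move=> a x y; have [S S_uniq supp] := dsum_supp_seq [:: x; y].
have supp_x r : dval x r <> 0 -> r \in S by apply: supp; rewrite !inE eqxx.
have supp_y r : dval y r <> 0 -> r \in S by apply: supp; rewrite !inE eqxx orbT.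
have supp_axy r : dval (a *: x + y) r <> 0 -> r \in S.
  rewrite /= => axy; have [x0|] := pselect (dval x r = 0); last exact: supp_x.
  by apply: supp_y => y0; apply: axy; rewrite x0 y0 scaler0 addr0.
rewrite !(kq_actE q S_uniq) // scaler_sumr -big_split /=.
by apply: eq_bigr => r _; rewrite scalerDl scalerA.
Qed.

Lemma kq_act_pbasis r q : kq_act (pbasis K r) q = pmul K r q.
Proof.
have supp s : dval (pbasis K r) s <> 0 -> s \in [:: r].
  by rewrite dval_pbasis inE eq_sym; case: eqP.
by rewrite (kq_actE q _ supp) // big_seq1 dval_pbasis eqxx scale1r.
Qed.

Lemma kq_act_expand x : exists2 S : seq path, uniq S &
  forall q, kq_act x q = \sum_(r <- S) dval x r *: kq_act (pbasis K r) q.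
Proof.
have [S S_uniq supp] := dsum_supp_seq [:: x].
exists S => // q; rewrite (kq_actE q S_uniq); last by move=> r; apply: supp; rewrite inE.
by apply: eq_bigr => r _; rewrite kq_act_pbasis.
Qed.

Lemma KQreg_is_kqmod : is_kqmod (KQreg K Q).
Proof.
split; [exact: kq_act_linear | split => x p q /=].
- move=> H; have [S _ xE] := kq_act_expand x; rewrite !xE.
  rewrite (linear_fun_sum (kq_act_linear q)) /=; apply: eq_bigr => r _.
  rewrite (linear_funZ (kq_act_linear q)) !kq_act_pbasis; congr (_ *: _).
  have [Hr|Hr] := pselect (ptgt r = psrc p); last first.
    by rewrite pmul_neq // (linear_fun0 (kq_act_linear q)) pmul_neq.
  rewrite (pmul_pcat Hr) kq_act_pbasis.
  have Hrp : ptgt (pcat Hr) = psrc q by rewrite ptgt_pcat.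
  rewrite (pmul_pcat Hrp) (pmul_pcat (_ : ptgt r = psrc (pcat H))) //.
  by congr (pbasis K _); apply: qpath_eq => //=; rewrite catA.
- move=> pq; have [S _ ->] := kq_act_expand x.
  rewrite (linear_fun_sum (kq_act_linear q)) big1 // => r _.
  rewrite (linear_funZ (kq_act_linear q)) kq_act_pbasis.
  have [Hr|Hr] := pselect (ptgt r = psrc p).
    by rewrite (pmul_pcat Hr) kq_act_pbasis pmul_neq ?scaler0 // ptgt_pcat.
  by rewrite pmul_neq // (linear_fun0 (kq_act_linear q)) scaler0.
Qed.

Lemma dval_kq_act_short x q s :
  (size (parr s) < size (parr q))%N -> dval (kq_act x q) s = 0.
Proof.
move=> s_short; have [S _ ->] := kq_act_expand x.
rewrite dval_sum big1 // => r _; rewrite kq_act_pbasis /=.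
have [Hr|Hr] := pselect (ptgt r = psrc q); last by rewrite pmul_neq // scaler0.
rewrite (pmul_pcat Hr) dval_pbasis; case: eqP => [rq_s|]; last by rewrite scaler0.
by move: s_short; rewrite -rq_s /= size_cat ltnNge leq_addl.
Qed.

End PathAlgebra.

Section GModule.
Variables (K : fieldType) (Q : quiver) (X : rep K Q).
Hypothesis X_lin : rep_linear X.
Local Notation M := (dsum (rsp X)).
Local Notation gact := (@mact _ _ (GX X)).

Lemma eq_rect_linear w u (E : w = u) :
  linear (fun x : rsp X w => eq_rect w (rsp X) x u E).
Proof. by case: u / E. Qed.

Lemma rpathl_linear w l (H : composable w l) : linear (rpathl (X := X) H).
Proof.
elim: l w H => [|b l IH] w H a x y //=.
by rewrite eq_rect_linear X_lin IH.
Qed.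

(* Stated through [dinj] since [endpt w (l1 ++ l2)] and
   [endpt (endpt w l1) l2] are equal but not convertible. *)
Lemma dinj_rpathl_cat w l1 l2 (H1 : composable w l1) (H2 : composable (endpt w l1) l2)
    (H12 : composable w (l1 ++ l2)) (x : rsp X w) :
  dinj (rpathl H12 x) = dinj (rpathl H2 (rpathl H1 x)).
Proof.
elim: l1 w H1 H2 H12 x => [|b l1 IH] w H1 H2 H12 x /=.
  by rewrite (Prop_irrelevance H12 H2).
by rewrite (Prop_irrelevance (proj1 H12) (proj1 H1)); apply: IH.
Qed.

Lemma GX_actE (m : M) p :
  gact m p = dinj (rpath (X := X) (p := p) (dval m (psrc p))).
Proof. by []. Qed.

Lemma GX_act_linear p : linear (fun m : M => gact m p).
Proof. by move=> a m m'; rewrite /= /rpath rpathl_linear dinj_linear. Qed.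

Lemma GX_is_kqmod : is_kqmod (GX X).
Proof.
split; [exact: GX_act_linear | split => m p [u l Hq]; rewrite !GX_actE].
- move=> H; change (ptgt p = u) in H; subst u; rewrite dval_dinj.
  by symmetry; apply: (dinj_rpathl_cat (pok p)).
- move=> pq; rewrite dval_dinj_neq //.
  by rewrite /rpath (linear_fun0 (rpathl_linear _)) (linear_fun0 (@dinj_linear _ _ _ _)).
Qed.

End GModule.

Section Cocycles.
Variables (K : fieldType) (Q : quiver) (M N : kqmod K Q).
Local Notation actM := (@mact _ _ M).
Local Notation actN := (@mact _ _ N).
Implicit Types (p q : qpath Q) (c : mcar M -> qpath Q -> mcar N).

Definition is_cocycle c : Prop :=
  [/\ forall p, linear (c ^~ p),
      forall m p q (H : ptgt p = psrc q), c m (pcat H) = actN (c m p) q + c (actM m p) q,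
      forall m p q, ptgt p <> psrc q -> actN (c m p) q = 0 &
      forall m p q, ptgt p <> psrc q -> c (actM m p) q = 0].

Definition is_coboundary c : Prop :=
  exists2 h : mcar M -> mcar N, linear h &
    forall m p, h (actM m p) = actN (h m) p + c m p.

Definition twisted_car : lmodType K := (mcar N * mcar M)%type.

Definition twisted c : kqmod K Q :=
  @KQMod K Q twisted_car (fun e p => (actN e.1 p + c e.2 p, actM e.2 p)).

Hypotheses (M_mod : is_kqmod M) (N_mod : is_kqmod N).

Lemma twisted_is_kqmod c : is_cocycle c -> is_kqmod (twisted c).
Proof.
case: M_mod => [M_lin [M_pcat M_zero]]; case: N_mod => [N_lin [N_pcat N_zero]].
case=> c_lin c_pcat c_zero1 c_zero2.
split; [|split] => [p a [n m] [n' m']|[n m] p q|[n m] p q].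
- apply/pair_equal_spec; split => /=; last exact: M_lin.
  by rewrite N_lin c_lin scalerDr addrACA.
- move=> H; apply/pair_equal_spec; split => /=; last exact: M_pcat.
  by rewrite (linear_funD (N_lin q)) N_pcat c_pcat addrA.
- move=> pq; apply/pair_equal_spec; split => /=; last exact: M_zero.
  by rewrite (linear_funD (N_lin q)) N_zero // c_zero1 // c_zero2 // !addr0.
Qed.

Lemma Ext1_neq0_of_cocycle c : is_cocycle c -> ~ is_coboundary c -> Ext1_neq0 M N.
Proof.
move=> c_cocycle not_cob; have [c_lin _ _ _] := c_cocycle; have [M_lin _] := M_mod.
exists (twisted c), (fun n => (n, 0) : twisted_car), snd.
split; first exact: twisted_is_kqmod.
split.
  split=> [a n n'|n p]; apply/pair_equal_spec; split => //=.
  - by rewrite scaler0 addr0.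
  - by rewrite (linear_fun0 (c_lin p)) addr0.
  - by rewrite (linear_fun0 (M_lin p)).
split; first by [].
split; first by move=> n n' [].
split; first by move=> m; exists (0, m).
split; first by move=> [n m]; split => [/= ->|[n' [_ <-]]] //; exists n.
move=> [sigma [[sigma_lin sigma_hom] sigmaK]]; apply: not_cob.
exists (fun m => (sigma m).1) => [a m m'|m p]; first by rewrite sigma_lin.
by rewrite sigma_hom /= sigmaK.
Qed.

End Cocycles.

Arguments is_cocycle {K Q} M N c.
Arguments is_coboundary {K Q} M N c.

Section ArrowCocycle.
Variables (K : fieldType) (Q : quiver) (X : rep K Q).
Hypothesis X_lin : rep_linear X.
Variable lam : forall b : qA Q, rsp X (qs b) -> K.
Arguments lam : clear implicits.
Hypothesis lam_scalar : forall b, scalar (lam b).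
Local Notation M := (dsum (rsp X)).
Local Notation KQ := (KQcar K Q).
Local Notation gact := (@mact _ _ (GX X)).

Fixpoint arrow_cocyclel w (l : seq (qA Q)) : composable w l -> M -> KQ :=
  match l with
  | [::] => fun _ _ => 0
  | b :: l' => fun H m =>
      lam b (dval m (qs b)) *: pbasis K (QPath (proj2 H))
      + arrow_cocyclel (proj2 H) (gact m (parrow b))
  end.

Definition arrow_cocycle (m : M) (p : qpath Q) : KQ := arrow_cocyclel (pok p) m.

Lemma arrow_cocyclel_cons w b l (H : composable w (b :: l)) (m : M) :
  arrow_cocyclel H m = lam b (dval m (qs b)) *: pbasis K (QPath (proj2 H))
                       + arrow_cocyclel (proj2 H) (gact m (parrow b)).
Proof. by []. Qed.

Lemma arrow_cocyclel_linear w l (H : composable w l) : linear (arrow_cocyclel H).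
Proof.
elim: l w H => [|b l IH] w H a m m'; first by rewrite /= scaler0 addr0.
rewrite !arrow_cocyclel_cons dvalD dvalZ lam_scalar scalerDl -scalerA.
by rewrite (GX_act_linear X_lin) IH scalerDr addrACA.
Qed.

Lemma arrow_cocyclel_local w l (H : composable w l) (m m' : M) :
  dval m w = dval m' w -> arrow_cocyclel H m = arrow_cocyclel H m'.
Proof.
case: l H => [|b l] H // mm'; have {}mm' : dval m (qs b) = dval m' (qs b).
  by rewrite (proj1 H).
by rewrite !arrow_cocyclel_cons !GX_actE /= mm'.
Qed.

Lemma arrow_cocyclel_cat w l (H : composable w l) q (E : endpt w l = psrc q)
    (Hq : composable w (l ++ parr q)) (m : M) :
  arrow_cocyclel Hq m =
    kq_act (arrow_cocyclel H m) q + arrow_cocycle (gact m (QPath H)) q.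
Proof.
elim: l w H E Hq m => [|b l IH] w H E Hq m.
  rewrite [arrow_cocyclel H m]/= (linear_fun0 (kq_act_linear q)) add0r.
  case: q E Hq => u lq Hu E Hq; change (w = u) in E; subst u.
  rewrite /arrow_cocycle (Prop_irrelevance Hq Hu); apply: arrow_cocyclel_local.
  by rewrite GX_actE dval_dinj.
rewrite !arrow_cocyclel_cons (IH (qt b) (proj2 H) E).
rewrite (linear_funD (kq_act_linear q)) addrA.
congr (_ + _ + _).
  rewrite (linear_funZ (kq_act_linear q)) kq_act_pbasis.
  rewrite (pmul_pcat K (p := QPath (proj2 H)) E).
  by congr (_ *: pbasis K _); apply: qpath_eq.
have [_ [GX_pcat _]] := GX_is_kqmod X_lin.
rewrite GX_pcat; congr (arrow_cocycle (gact m _) q); apply: qpath_eq => //=.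
exact: (proj1 H).
Qed.

Lemma arrow_cocyclel_act_neq w l (H : composable w l) (m : M) q :
  endpt w l <> psrc q -> kq_act (arrow_cocyclel H m) q = 0.
Proof.
elim: l w H m => [|b l IH] w H m /= wq; first exact: (linear_fun0 (kq_act_linear q)).
rewrite (linear_funD (kq_act_linear q)) (linear_funZ (kq_act_linear q)).
by rewrite kq_act_pbasis pmul_neq // IH // scaler0 addr0.
Qed.

Lemma dval_arrow_cocyclel_long w l (H : composable w l) (m : M) s :
  (size l <= size (parr s))%N -> dval (arrow_cocyclel H m) s = 0.
Proof.
elim: l w H m => [|b l IH] w H m // ls.
rewrite arrow_cocyclel_cons dvalD IH ?(ltnW ls) // addr0 dvalZ dval_pbasis.
case: eqP => [ls_eq|_]; last by rewrite scaler0.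
by move: ls; rewrite -ls_eq ltnn.
Qed.

Lemma dval_arrow_cocyclel_tail w b l (H : composable w (b :: l)) (m : M) :
  dval (arrow_cocyclel H m) (QPath (proj2 H)) = lam b (dval m (qs b)).
Proof.
rewrite arrow_cocyclel_cons dvalD dval_arrow_cocyclel_long // addr0 dvalZ.
by rewrite dval_pbasis eqxx; exact: mulr1.
Qed.

Lemma arrow_cocycle_is_cocycle : is_cocycle (GX X) (KQreg K Q) arrow_cocycle.
Proof.
split=> [p|m p q H|m p q pq|m p q pq].
- exact: arrow_cocyclel_linear.
- by case: p H => w l Hp /= H; apply: arrow_cocyclel_cat.
- by case: p pq => w l Hp /= pq; apply: arrow_cocyclel_act_neq.
- rewrite /arrow_cocycle (arrow_cocyclel_local _ (m' := 0)).
    exact: (linear_fun0 (arrow_cocyclel_linear _)).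
  by rewrite GX_actE dval_dinj_neq.
Qed.

End ArrowCocycle.

Section Obstruction.
Variables (K : fieldType) (Q : quiver) (X : rep K Q).
Variables (v : nat -> qV Q) (arr : nat -> qA Q).
Hypotheses (arr_src : forall j, qs (arr j) = v j.+1)
           (arr_tgt : forall j, qt (arr j) = v j).
Variable lam : forall b : qA Q, rsp X (qs b) -> K.
Arguments lam : clear implicits.
Hypothesis lam_arr_neq0 : forall j, exists x, lam (arr j) x <> 0.
Hypothesis X_v0_findim : findim (rsp X (v 0)).
Local Notation gact := (@mact _ _ (GX X)).

Fixpoint arrows_down j : seq (qA Q) :=
  if j is j'.+1 then arr j' :: arrows_down j' else [::].

Lemma composable_down j : composable (v j) (arrows_down j).
Proof. by elim: j => //= j IH; rewrite arr_tgt. Qed.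

Lemma endpt_down j : endpt (v j) (arrows_down j) = v 0.
Proof. by elim: j => //= j; rewrite arr_tgt. Qed.

Lemma size_down j : size (arrows_down j) = j.
Proof. by elim: j => //= j ->. Qed.

Definition path_down j : qpath Q := QPath (composable_down j).

Lemma path_down_inj : injective path_down.
Proof. by move=> i j /(congr1 (fun p => size (parr p))); rewrite /= !size_down. Qed.

Lemma coboundary_coeff_down (h : dsum (rsp X) -> KQcar K Q)
    (h_cob : forall m p, h (gact m p) = kq_act (h m) p + arrow_cocycle lam m p)
    j (x : rsp X (qs (arr j))) :
  dval (h (gact (dinj x) (path_down j.+1))) (path_down j) = lam (arr j) x.
Proof.
rewrite h_cob dvalD dval_kq_act_short ?add0r; last by rewrite /= !size_down.
have -> : path_down j = QPath (proj2 (composable_down j.+1)).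
  by apply: qpath_eq => //=; rewrite arr_tgt.
by rewrite /arrow_cocycle dval_arrow_cocyclel_tail dval_dinj.
Qed.

Lemma arrow_cocycle_not_coboundary :
  ~ is_coboundary (GX X) (KQreg K Q) (arrow_cocycle lam).
Proof.
move=> [h h_lin h_cob].
have hdinj_lin : linear (fun y : rsp X (v 0) => h (dinj y)).
  by move=> a y z; rewrite dinj_linear h_lin.
have [A A_fin A_supp] := findim_supp_bounded X_v0_findim hdinj_lin.
apply: infinite_nat; suff <- : path_down @^-1` A = setT.
  by apply: finite_preimage => // i j _ _; apply: path_down_inj.
apply/seteqP; split => // j _ /=; have [x x_neq0] := lam_arr_neq0 j.
(* [x p_(j+1)] lies in the summand at [ptgt (path_down j.+1)], which is [v 0]
   only propositionally. *)
have [y gact_y] := dinj_transport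
  (rpath (X := X) (p := path_down j.+1) (dval (dinj x) (v j.+1))) (endpt_down j.+1).
by apply: (A_supp y); rewrite -gact_y -GX_actE coboundary_coeff_down.
Qed.

End Obstruction.

Lemma separating_of_iso (K : fieldType) (Q : quiver) (X : rep K Q) (u : qV Q) k :
  rep_iso_on (reachable u) X (rep_pow k (Fe K u)) -> separating (rsp X u).
Proof.
move=> [phi [phiP _]].
have [phi_lin /bij_inj phi_inj] := phiP u (ex_intro _ (triv u) (conj erefl erefl)).
apply: (separating_inj phi_lin phi_inj).
exact (@separating_ffun K k (rsp (Fe K u) u) (@separating_scalar_dsum K (pathsft u u))).
Qed.

Lemma exists_arrow_functionals (K : fieldType) (Q : quiver) (X : rep K Q)
    (arr : nat -> qA Q) :
  (forall j, exists2 l : rsp X (qs (arr j)) -> K, scalar l & exists x, l x <> 0) ->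
  exists lam : forall b : qA Q, rsp X (qs b) -> K,
    (forall b, scalar (lam b)) /\ forall j, exists x, lam (arr j) x <> 0.
Proof.
move=> arr_dual.
have dual b : exists l : rsp X (qs b) -> K,
    scalar l /\ ((exists j, arr j = b) -> exists x, l x <> 0).
  have [[j <-]|no_j] := pselect (exists j, arr j = b).
    by have [l l_scalar l_neq0] := arr_dual j; exists l.
  by exists (fun=> 0); split => [a x y|jb]; [rewrite mulr0 addr0 | case: (no_j jb)].
exists (fun b => sval (cid (dual b))); split => [b|j]; first by case: cid => l [].
by case: (cid (dual (arr j))) => l [_ l_neq0] /=; apply: l_neq0; exists j.
Qed.

Theorem proposition1p10 (K : closedFieldType) (Q : quiver)
    (v : nat -> qV Q) (X : rep K Q) :
  acyclic Q ->
  injective v ->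
  (forall n : nat, exists a : qA Q, qs a = v n.+1 /\ qt a = v n) ->
  rep_linear X ->
  rep_findim X ->
  (forall n : nat, exists x : rsp X (v n), x <> 0%R) ->
  (forall n : nat, exists k : nat,
      rep_iso_on (reachable (v n)) X (rep_pow k (Fe K (v n)))) ->
  Ext1_neq0 (GX X) (KQreg K Q).
Proof.
move=> _ _ chain_arrows X_lin X_findim X_neq0 X_iso.
have [arr arrP] := choice chain_arrows.
have arr_src j : qs (arr j) = v j.+1 by case: (arrP j).
have arr_tgt j : qt (arr j) = v j by case: (arrP j).
have arr_dual j : exists2 l : rsp X (qs (arr j)) -> K, scalar l & exists x, l x <> 0.
  rewrite arr_src; have [k Xk] := X_iso j.+1; have [x x_neq0] := X_neq0 j.+1.
  by have [l l_scalar lx] := separating_of_iso Xk x_neq0; exists l; last exists x.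
have [lam [lam_scalar lam_neq0]] := exists_arrow_functionals arr_dual.
apply: (Ext1_neq0_of_cocycle (GX_is_kqmod X_lin) (KQreg_is_kqmod K Q)).
  exact: arrow_cocycle_is_cocycle.
exact: (arrow_cocycle_not_coboundary arr_src arr_tgt lam_neq0 (X_findim (v 0))).
Qed.
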